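(* Let $T=(T_a,T_b)$ be a rooted binary tree on $n$ leaves, where $T_a$ and $T_b$ have $n_a$ and $n_b$ leaves respectively. If $n_a\neq n_b$ and both $n_a$ and $n_b$ are odd, then $\mathcal{C}(T)>c_n$, i.e. $T$ does not have minimal Colless index.
   Context: A rooted binary tree with $n\geq 2$ leaves is a rooted tree whose root has degree 2 and all other internal nodes have degree 3; for $n=1$ it is a single node. $T=(T_a,T_b)$ denotes the decomposition into the two subtrees rooted at the children of the root. For an internal node $v$ with children $v_1,v_2$, let $\kappa(v_i)$ be the number of leaves descending from $v_i$ ($1$ if a leaf). The Colless index is $\mathcal{C}(T)=\sum_v|\kappa(v_1)-\kappa(v_2)|$ over internal nodes $v$; $c_n$ is the minimum of $\mathcal{C}$ over rooted binary trees with $n$ leaves. *)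

From mathcomp Require Import all_boot.
Set Implicit Arguments. Unset Strict Implicit. Unset Printing Implicit Defensive.

Inductive tree : Type :=
| Leaf : tree
| Node : tree -> tree -> tree.

Fixpoint leaves (t : tree) : nat :=
  match t with
  | Leaf => 1
  | Node a b => leaves a + leaves b
  end.

Definition absdiff (m n : nat) : nat := (m - n) + (n - m).

(* Colless index: sum over internal nodes v of |kappa(v1) - kappa(v2)| *)
Fixpoint colless (t : tree) : nat :=
  match t with
  | Leaf => 0
  | Node a b => absdiff (leaves a) (leaves b) + colless a + colless b
  end.

Fixpoint trees_upto (d : nat) : seq tree :=
  match d with
  | 0 => [:: Leaf]
  | d'.+1 => Leaf :: [seq Node a b | a <- trees_upto d', b <- trees_upto d']
  end.

(* Trees with n leaves have height < n, so this lists every tree with n leaves. *)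
Definition trees_with (n : nat) : seq tree :=
  [seq t <- trees_upto n | leaves t == n].

(* c_n : minimum Colless index over rooted binary trees with n leaves
   (meaningful for n >= 1; the list is empty for n = 0). *)
Definition min_colless (n : nat) : nat :=
  let cs := [seq colless t | t <- trees_with n] in foldr minn (foldr maxn 0 cs) cs.

From HB Require Import structures.
From mathcomp Require Import all_boot zify.

Set Implicit Arguments.
Unset Strict Implicit.
Unset Printing Implicit Defensive.

(* The minimum c_n is attained by the maximally balanced tree, whose subtrees
   have ceil(n/2) and floor(n/2) leaves; its Colless index c satisfies
   c(2k) = 2c(k) and c(2k+1) = c(k) + c(k+1) + 1.  A strong induction on
   a + b, split by the parities of a and b, shows
   c(a + b) <= c(a) + c(b) + |a - b|, hence c(leaves T) <= C(T) for every T.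
   For odd a = 2x+1 <> b = 2y+1 the induction hypothesis at the splittings
   (x, y+1) and (x+1, y) of x+y+1 costs imbalances summing to exactly
   2|x - y| = |a - b|, while the recurrences for c(a) and c(b) contribute
   at least one extra +1; so the inequality is strict and such a root split
   is never optimal. *)

Definition tree_eq_dec (s t : tree) : {s = t} + {s <> t}.
Proof. decide equality. Defined.

HB.instance Definition _ := hasDecEq.Build tree (compareP tree_eq_dec).

Fixpoint balf (fuel n : nat) : tree :=
  if fuel is f.+1 then
    if n <= 1 then Leaf else Node (balf f (uphalf n)) (balf f n./2)
  else Leaf.

Definition bal (n : nat) : tree := balf n n.

Lemma balf_fuel f g n : n <= f -> n <= g -> balf f n = balf g n.
Proof.
elim: f g n => [|f IHf] [|g] n le_nf le_ng //=; try by case: ifP => //; lia.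
by case: ifP => // gt1n; congr Node; apply: IHf; lia.
Qed.

Lemma bal_Node n : 1 < n -> bal n = Node (bal (uphalf n)) (bal n./2).
Proof.
case: n => [|m] // lt1m; rewrite /bal [LHS]/=.
by case: ifP => [|_]; [lia | congr Node; apply: balf_fuel; lia].
Qed.

Lemma leaves_balf f n : 0 < n <= f -> leaves (balf f n) = n.
Proof.
elim: f n => [|f IHf] n /= n_range; first lia.
by case: ifP => ? /=; [lia | rewrite !IHf; lia].
Qed.

Lemma leaves_bal n : 0 < n -> leaves (bal n) = n.
Proof. by move=> n_gt0; apply: leaves_balf; rewrite n_gt0 leqnn. Qed.

Lemma balf_in_trees_upto f n : balf f n \in trees_upto f.
Proof.
elim: f n => [|f IHf] n /=; first exact: mem_head.
by case: ifP => _; rewrite inE ?eqxx // allpairs_f ?orbT.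
Qed.

Definition cbal (n : nat) : nat := colless (bal n).

Lemma cbal_rec n :
  1 < n -> cbal n = cbal (uphalf n) + cbal n./2 + absdiff (uphalf n) n./2.
Proof. by move=> lt1n; rewrite /cbal bal_Node //= !leaves_bal; lia. Qed.

Lemma cbal_double k : cbal k.*2 = (cbal k).*2.
Proof.
case: k => [|k] //; rewrite cbal_rec ?uphalf_double ?doubleK; rewrite /absdiff; lia.
Qed.

(* The term [k != 0] makes the recurrence also hold at k = 0, where c(1) = 0. *)
Lemma cbal_doubleS k : cbal k.*2.+1 = cbal k + cbal k.+1 + (k != 0).
Proof.
case: k => [|k] //; rewrite cbal_rec /= ?uphalf_double ?doubleK; rewrite /absdiff; lia.
Qed.

Section SplitStep.

Variable n : nat.
Hypothesis IHn :
  forall a b, a + b < n -> cbal (a + b) <= cbal a + cbal b + absdiff a b.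

Lemma cbal_split_even_even x y :
  x.*2 + y.*2 <= n -> cbal (x.*2 + y.*2) <= cbal x.*2 + cbal y.*2 + absdiff x.*2 y.*2.
Proof.
rewrite -doubleD !cbal_double => le_n.
case: (posnP (x + y)) => [-> // | xy_gt0].
by have := @IHn x y; rewrite /absdiff; lia.
Qed.

Lemma cbal_split_even_odd x y : 0 < x ->
  x.*2 + y.*2.+1 <= n ->
  cbal (x.*2 + y.*2.+1) <= cbal x.*2 + cbal y.*2.+1 + absdiff x.*2 y.*2.+1.
Proof.
rewrite addnS -doubleD !cbal_doubleS cbal_double => x_gt0 le_n.
case: (posnP y) => [-> | y_gt0].
  by have := @IHn x 1; rewrite !addn0 addn1 /absdiff; lia.
by have := @IHn x y; have := @IHn x y.+1; rewrite addnS /absdiff; lia.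
Qed.

Lemma cbal_split_odd_odd x y : x != y ->
  x.*2.+1 + y.*2.+1 <= n ->
  cbal (x.*2.+1 + y.*2.+1) < cbal x.*2.+1 + cbal y.*2.+1 + absdiff x.*2.+1 y.*2.+1.
Proof.
rewrite addSn addnS -doubleD -doubleS cbal_double !cbal_doubleS => neq_xy le_n.
by have := @IHn x y.+1; have := @IHn x.+1 y; rewrite addnS addSn /absdiff; lia.
Qed.

End SplitStep.

Lemma absdiffC m n : absdiff m n = absdiff n m.
Proof. by rewrite /absdiff addnC. Qed.

Lemma cbal_split_le a b : cbal (a + b) <= cbal a + cbal b + absdiff a b.
Proof.
have [n] := ubnP (a + b); elim: n a b => // n IHn a b /ltnSE-le_ab_n.
case: (posnP a) => [-> | a_gt0]; first by rewrite add0n /absdiff; lia.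
case: (posnP b) => [-> | b_gt0]; first by rewrite addn0 /absdiff; lia.
have [<- | neq_ab] := eqVneq a b; first by rewrite [a + a]addnn cbal_double /absdiff; lia.
have [x [a_even | a_odd]] : exists x, a = x.*2 \/ a = x.*2.+1 by exists a./2; lia.
all: have [y [b_even | b_odd]] : exists y, b = y.*2 \/ b = y.*2.+1 by exists b./2; lia.
all: subst a b.
- exact: (cbal_split_even_even IHn).
- by apply: (cbal_split_even_odd IHn); lia.
- rewrite addnC [cbal _ + cbal _]addnC absdiffC.
  by apply: (cbal_split_even_odd IHn); lia.
- apply/ltnW/(cbal_split_odd_odd IHn) => //.
  by apply: contraNneq neq_ab => ->.
Qed.

Lemma cbal_split_odd_lt a b : odd a -> odd b -> a != b ->
  cbal (a + b) < cbal a + cbal b + absdiff a b.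
Proof.
move=> odd_a odd_b neq_ab.
rewrite -(odd_double_half a) -(odd_double_half b) odd_a odd_b !add1n in neq_ab *.
apply: (cbal_split_odd_odd (fun a' b' _ => cbal_split_le a' b')) => //.
by apply: contraNneq neq_ab => ->.
Qed.

Lemma cbal_leaves_le t : cbal (leaves t) <= colless t.
Proof.
elim: t => [|ta IHa tb IHb] //=.
by have := cbal_split_le (leaves ta) (leaves tb); lia.
Qed.

Lemma foldr_minn_le d s x : x \in s -> foldr minn d s <= x.
Proof.
elim: s => [|y s IHs] //=; rewrite inE => /predU1P[-> | /IHs]; first exact: geq_minl.
exact: leq_trans (geq_minr _ _).
Qed.

Lemma min_colless_le_cbal n : 0 < n -> min_colless n <= cbal n.
Proof.
move=> n_gt0; apply: foldr_minn_le; apply: map_f.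
by rewrite mem_filter leaves_bal // eqxx balf_in_trees_upto.
Qed.

Lemma leaves_gt0 t : 0 < leaves t.
Proof. by elim: t => //= ta IHa tb IHb; rewrite addn_gt0 IHa. Qed.

Theorem theorem7 (Ta Tb : tree) :
  leaves Ta != leaves Tb ->
  odd (leaves Ta) -> odd (leaves Tb) ->
  min_colless (leaves (Node Ta Tb)) < colless (Node Ta Tb).
Proof.
move=> neq_ab odd_a odd_b.
apply: leq_ltn_trans (min_colless_le_cbal (leaves_gt0 (Node Ta Tb))) _ => /=.
apply: leq_trans (cbal_split_odd_lt odd_a odd_b neq_ab) _.
by have := cbal_leaves_le Ta; have := cbal_leaves_le Tb; lia.
Qed.
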